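(* Let $v\ge2$, $\epsilon>0$ and $k\in\{1,\dots,v-1\}$. Then $k\in K_{opt}(v,\epsilon)$ if and only if $$E(k,k+1;v)\le e^\epsilon\le E(k-1,k;v).$$ Moreover, if $e^\epsilon=E(k,k+1;v)$ for some $k$, then $K_{opt}(v,\epsilon)=\{k,k+1\}$; otherwise $K_{opt}(v,\epsilon)$ is a singleton.
   Context: $K_{opt}(v,\epsilon)$ is the set of integers $k\in\{1,\dots,v-1\}$ minimizing $\frac{(ke^\epsilon+v-k)^2}{k(v-k)}$. For integers $0\le k_1<k_2\le v$ with $(k_1,k_2)\ne(0,v)$, $E(k_1,k_2;v)=\sqrt{\frac{(v-k_1)(v-k_2)}{k_1k_2}}$ when $k_1\ge1$, and $E(0,k_2;v):=\infty$. *)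

From HB Require Import structures.
From mathcomp Require Import all_boot all_order all_algebra.
From mathcomp Require Import all_classical all_reals all_analysis.
Set Implicit Arguments. Unset Strict Implicit. Unset Printing Implicit Defensive.
Import Order.TTheory GRing.Theory Num.Theory.
Local Open Scope classical_set_scope.
Local Open Scope ring_scope.

Definition kobj {R : realType} (v : nat) (eps : R) (k : nat) : R :=
  (k%:R * expR eps + (v - k)%:R) ^+ 2 / (k%:R * (v - k)%:R).

Definition Kopt {R : realType} (v : nat) (eps : R) : set nat :=
  [set k | (1 <= k <= v.-1)%N /\
           forall j, (1 <= j <= v.-1)%N -> kobj v eps k <= kobj v eps j].

Definition Eval {R : realType} (k1 k2 v : nat) : \bar R :=
  if k1 == 0%N then +oo%E
  else (Num.sqrt (((v - k1) * (v - k2))%:R / (k1 * k2)%:R : R))%:E.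

From HB Require Import structures.
From mathcomp Require Import all_boot all_order all_algebra.
From mathcomp Require Import all_classical all_reals all_analysis.
From mathcomp Require Import zify ring.
Set Implicit Arguments. Unset Strict Implicit. Unset Printing Implicit Defensive.
Import Order.TTheory Order.NatMonotonyTheory GRing.Theory Num.Theory.
Local Open Scope classical_set_scope.
Local Open Scope ring_scope.

(* The increment kobj(k+1) - kobj(k) is a positive multiple of
   e^(2 eps) - E(k,k+1;v)^2, and E(k,k+1;v) is strictly decreasing in k.
   Hence kobj is discretely unimodal on {1,...,v-1}: it decreases while
   E(k,k+1;v) > e^eps and increases afterwards.  So k is a minimizer iff the
   increments on both sides of k have the right signs; two minimizers i < j
   force e^eps = E(i,i+1;v), which pins them down to {i, i+1}. *)

Section DiscreteUnimodal.
Variables (R : realDomainType) (f c : nat -> R) (b : R) (n : nat).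

Definition minimizers : set nat :=
  [set k | (1 <= k <= n)%N /\ forall j, (1 <= j <= n)%N -> f k <= f j].

Hypothesis c_step : forall i, (1 <= i)%N -> (i < n)%N -> c i.+1 < c i.
Hypothesis f_step : forall i, (1 <= i)%N -> (i < n)%N ->
  exists2 p, 0 < p & f i.+1 - f i = p * (b - c i).

Let nat_interval_convex (m p : nat) :
  {in [pred i | m <= i <= p]%N &, forall i j k,
    (i < k < j)%O -> k \in [pred i | m <= i <= p]%N}.
Proof.
by move=> i j; rewrite !inE /= => ? ? k; rewrite inE !ltEnat /=; lia.
Qed.

Lemma c_nonincr i j : (1 <= i)%N -> (i <= j <= n)%N -> c j <= c i.
Proof.
move=> i1 ijn; have iD : i \in [pred i | 1 <= i <= n]%N by rewrite inE /=; lia.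
have jD : j \in [pred i | 1 <= i <= n]%N by rewrite inE /=; lia.
apply: (nonincn_inP (@nat_interval_convex 1 n) _ _ _ jD iD); last by case/andP: ijn.
by move=> k; rewrite !inE /= => ? ?; apply/ltW/c_step; lia.
Qed.

Lemma c_decr i j : (1 <= i)%N -> (i < j <= n)%N -> c j < c i.
Proof.
move=> i1 ijn; apply: (le_lt_trans (y := c i.+1)).
  by apply: c_nonincr; lia.
by apply: c_step; lia.
Qed.

Lemma f_le_succ i : (1 <= i)%N -> (i < n)%N -> (f i <= f i.+1) = (c i <= b).
Proof.
move=> i1 ilt; have [p p_gt0 df] := f_step i1 ilt.
by rewrite -subr_ge0 df pmulr_rge0 // subr_ge0.
Qed.

Lemma f_succ_le i : (1 <= i)%N -> (i < n)%N -> (f i.+1 <= f i) = (b <= c i).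
Proof.
move=> i1 ilt; have [p p_gt0 df] := f_step i1 ilt.
by rewrite -subr_le0 df pmulr_rle0 // subr_le0.
Qed.

Lemma f_nondecr_from k j : (1 <= k)%N -> (k <= j <= n)%N ->
  ((k < n)%N -> c k <= b) -> f k <= f j.
Proof.
move=> k1 kjn ckb; have kD : k \in [pred i | k <= i <= n]%N by rewrite inE /=; lia.
have jD : j \in [pred i | k <= i <= n]%N by rewrite inE /=; lia.
apply: (nondecn_inP (@nat_interval_convex k n) _ _ _ kD jD); last by case/andP: kjn.
move=> i; rewrite !inE /= => ? ?; rewrite f_le_succ; try lia.
by apply: le_trans (ckb _); [apply: c_nonincr | ]; lia.
Qed.

Lemma f_nonincr_to k j : (1 <= j <= k)%N -> (k <= n)%N ->
  ((1 < k)%N -> b <= c k.-1) -> f k <= f j.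
Proof.
move=> jk kn bck; have kD : k \in [pred i | 1 <= i <= k]%N by rewrite inE /=; lia.
have jD : j \in [pred i | 1 <= i <= k]%N by rewrite inE /=; lia.
apply: (nonincn_inP (@nat_interval_convex 1 k) _ _ _ kD jD); last by case/andP: jk.
move=> i; rewrite !inE /= => ? ?; rewrite f_succ_le; try lia.
by apply: le_trans (bck _) _; [ | apply: c_nonincr]; lia.
Qed.

Lemma minimizersP k : (1 <= k <= n)%N ->
  minimizers k <-> ((k < n)%N -> c k <= b) /\ ((1 < k)%N -> b <= c k.-1).
Proof.
move=> kn; split=> [[_ kmin] | [ckb bck]].
  split=> [klt | k1]; first by rewrite -f_le_succ ?kmin //; lia.
  by rewrite -f_succ_le ?prednK ?kmin //; lia.
split=> // j jn; have [kj | jk] := leqP k j.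
- by apply: f_nondecr_from => //; lia.
- by apply: f_nonincr_to => //; lia.
Qed.

Lemma minimizers_lt_eq {i j} :
  minimizers i -> minimizers j -> (i < j)%N -> b = c i.
Proof.
move=> mi mj ij; have [i_in j_in] := (mi.1, mj.1).
have [ci _] := (minimizersP i_in).1 mi.
have [_ cj] := (minimizersP j_in).1 mj.
apply/le_anti; rewrite ci ?andbT; last lia.
by apply: le_trans (cj _) _; [lia | apply: c_nonincr; lia].
Qed.

Lemma minimizers_tie k : (1 <= k)%N -> (k < n)%N -> b = c k ->
  minimizers = [set k; k.+1].
Proof.
move=> k1 kn bck; apply/seteqP; split=> [j mj | j] /=.
  have [cjb bcj] := (minimizersP mj.1).1 mj; have j_in := mj.1.
  have [jk | kj] := ltnP j k.
    have : c k < c j by apply: c_decr; lia.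
    by rewrite -bck ltNge cjb //; lia.
  have [jk1 | k1j] := leqP j k.+1.
    by have [-> | ?] := eqVneq j k; [left | right; lia].
  have : c j.-1 < c k by apply: c_decr; lia.
  by rewrite -bck ltNge bcj //; lia.
case=> ->; apply/minimizersP; try lia; split=> ?; rewrite bck //.
- by apply: c_nonincr; lia.
- exact/ltW/c_step.
Qed.

Lemma minimizers_exists : (1 <= n)%N -> exists k, minimizers k.
Proof.
move=> n1; pose P := [pred i : 'I_n.+1 | 1 <= i]%N.
have [i Pi imin] := @arg_minP _ _ _ ord_max P (fun i => f i) n1.
exists i; split; first by rewrite (Pi : 1 <= i)%N -ltnS ltn_ord.
move=> j jn; have := imin (inord j); rewrite inordK ?ltnS; last lia.
by apply; rewrite inE inordK ?ltnS; lia.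
Qed.

Lemma minimizers_unique : (1 <= n)%N ->
  (forall k, (1 <= k < n)%N -> b <> c k) -> exists k, minimizers = [set k].
Proof.
move=> n1 no_tie; have [k mk] := minimizers_exists n1.
exists k; apply/seteqP; split=> [j mj | j ->] //=.
have [k_in j_in] := (mk.1, mj.1).
case: (ltngtP j k) => [jk | kj | //]; exfalso.
- by apply: (no_tie j _ (minimizers_lt_eq mj mk jk)); lia.
- by apply: (no_tie k _ (minimizers_lt_eq mk mj kj)); lia.
Qed.

End DiscreteUnimodal.

Section SqrtBounds.
Variables (R : rcfType) (a x : R).
Hypothesis a_ge0 : 0 <= a.

Let sqrt_sqr_nneg : Num.sqrt (a ^+ 2) = a.
Proof. by rewrite sqrtr_sqr ger0_norm. Qed.

Lemma sqrtr_le : (Num.sqrt x <= a) = (x <= a ^+ 2).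
Proof. by rewrite -{1}sqrt_sqr_nneg ler_sqrt ?sqr_ge0. Qed.

Lemma le_sqrtr : 0 <= x -> (a <= Num.sqrt x) = (a ^+ 2 <= x).
Proof. by move=> x_ge0; rewrite -{1}sqrt_sqr_nneg ler_sqrt. Qed.

Lemma eq_sqrtr : 0 <= x -> a = Num.sqrt x <-> a ^+ 2 = x.
Proof. by move=> x_ge0; split=> [-> | <-]; rewrite ?sqr_sqrtr. Qed.

End SqrtBounds.

Definition Esqr {R : numFieldType} (v k : nat) : R :=
  ((v - k) * (v - k.+1))%:R / (k * k.+1)%:R.

Lemma Esqr_ge0 (R : numFieldType) v k : 0 <= Esqr v k :> R.
Proof. by rewrite divr_ge0 ?ler0n. Qed.

Lemma Esqr_eq0 (R : numFieldType) v k : (v <= k.+1)%N -> Esqr v k = 0 :> R.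
Proof. by move=> vk; rewrite /Esqr (_ : v - k.+1 = 0)%N ?muln0 ?mul0r //; lia. Qed.

Lemma Esqr_succ_lt (R : numFieldType) v k : (1 <= k)%N -> (k.+2 <= v)%N ->
  Esqr v k.+1 < Esqr v k :> R.
Proof.
move=> k1 kv; rewrite /Esqr ltr_pdivrMr ?ltr0n; last lia.
rewrite mulrAC ltr_pdivlMr ?ltr0n; last lia.
rewrite -!natrM ltr_nat.
have -> : (v - k = (v - k.+2) + 2)%N by lia.
have -> : (v - k.+1 = (v - k.+2) + 1)%N by lia.
nia.
Qed.

Lemma Eval_succ (R : realType) v k : (1 <= k)%N ->
  @Eval R k k.+1 v = (Num.sqrt (Esqr v k))%:E.
Proof. by move=> k1; rewrite /Eval ifF //; apply/negbTE; lia. Qed.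

Lemma kobj_succ_sub (R : realType) v (eps : R) k : (1 <= k)%N -> (k.+2 <= v)%N ->
  kobj v eps k.+1 - kobj v eps k =
  v%:R / ((v - k)%:R * (v - k.+1)%:R) * (expR eps ^+ 2 - Esqr v k).
Proof.
move=> k1 kv; rewrite /kobj /Esqr !natrM !natrB; try lia.
have k_neq0 : k%:R != 0 :> R by rewrite pnatr_eq0; lia.
have k1_neq0 : k%:R + 1 != 0 :> R by rewrite natr1 pnatr_eq0.
have vk_neq0 : v%:R - k%:R != 0 :> R by rewrite subr_eq0 eqr_nat; lia.
have vk1_neq0 : v%:R - (k%:R + 1) != 0 :> R by rewrite natr1 subr_eq0 eqr_nat; lia.
rewrite -!natr1; field.
by rewrite k_neq0 k1_neq0 vk_neq0 vk1_neq0.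
Qed.

Section Kopt.
Variables (R : realType) (v : nat) (eps : R).

Let Esqr_step i : (1 <= i)%N -> (i < v.-1)%N -> Esqr v i.+1 < Esqr v i :> R.
Proof. by move=> i1 iv; apply: Esqr_succ_lt; lia. Qed.

Let kobj_step i : (1 <= i)%N -> (i < v.-1)%N -> exists2 p, 0 < p &
  kobj v eps i.+1 - kobj v eps i = p * (expR eps ^+ 2 - Esqr v i).
Proof.
move=> i1 iv; rewrite kobj_succ_sub; try lia.
eexists; last reflexivity.
by rewrite divr_gt0 ?mulr_gt0 ?ltr0n //; lia.
Qed.

Lemma Kopt_minimizers : Kopt v eps = minimizers (kobj v eps) v.-1.
Proof. by []. Qed.

Lemma KoptP k : (1 <= k <= v.-1)%N -> Kopt v eps k <->
  Esqr v k <= expR eps ^+ 2 /\ ((1 < k)%N -> expR eps ^+ 2 <= Esqr v k.-1).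
Proof.
move=> kv; rewrite Kopt_minimizers (minimizersP Esqr_step kobj_step kv).
have [kv' | vk] := ltnP k v.-1; first by split=> -[Esqr_le ?]; split=> //; apply: Esqr_le.
rewrite Esqr_eq0 ?sqr_ge0; last lia.
by split=> -[_ ?].
Qed.

Lemma Kopt_tie k : (1 <= k)%N -> expR eps ^+ 2 = Esqr v k ->
  Kopt v eps = [set k; k.+1].
Proof.
move=> k1 tie; have kv : (k < v.-1)%N.
  rewrite ltnNge; apply/negP => vk; move: tie; rewrite Esqr_eq0; last lia.
  by move/eqP; rewrite sqrf_eq0 gt_eqF ?expR_gt0.
by rewrite Kopt_minimizers (minimizers_tie Esqr_step kobj_step k1 kv).
Qed.

Lemma Kopt_unique : (2 <= v)%N ->
  (forall k, (1 <= k < v.-1)%N -> expR eps ^+ 2 <> Esqr v k) ->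
  exists k, Kopt v eps = [set k].
Proof.
move=> v2 no_tie; rewrite Kopt_minimizers.
by apply: (minimizers_unique Esqr_step kobj_step) => //; lia.
Qed.

End Kopt.

Lemma lee_Eval_succ (R : realType) (a : R) k v : 0 <= a -> (1 <= k)%N ->
  (Eval k k.+1 v <= a%:E)%E = (Esqr v k <= a ^+ 2).
Proof. by move=> a_ge0 k1; rewrite Eval_succ // lee_fin sqrtr_le. Qed.

Lemma gee_Eval_pred (R : realType) (a : R) k v : 0 <= a -> (1 <= k)%N ->
  (a%:E <= Eval k.-1 k v)%E <-> ((1 < k)%N -> a ^+ 2 <= Esqr v k.-1).
Proof.
move=> a_ge0 k1; have [-> | k_gt1] := eqVneq k 1%N; first by rewrite leey.
rewrite -[in Eval _ k _](prednK k1) Eval_succ; last lia.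
by rewrite lee_fin le_sqrtr ?Esqr_ge0 //; split=> // /(_ _); apply; lia.
Qed.

Lemma Eval_succ_eq (R : realType) (a : R) k v : 0 <= a -> (1 <= k)%N ->
  a%:E = Eval k k.+1 v <-> a ^+ 2 = Esqr v k.
Proof.
move=> a_ge0 k1; rewrite Eval_succ // -(eq_sqrtr a_ge0 (Esqr_ge0 _ _ _)).
by split=> [[] | ->].
Qed.

Theorem proposition2 (R : realType) (v : nat) (eps : R) :
  (2 <= v)%N -> 0 < eps ->
  (forall k : nat, (1 <= k <= v.-1)%N ->
     (Kopt v eps k <->
      ((@Eval R k k.+1 v <= (expR eps)%:E)%E /\ ((expR eps)%:E <= @Eval R k.-1 k v)%E)))
  /\ (forall k : nat, (1 <= k <= v.-1)%N -> (expR eps)%:E = @Eval R k k.+1 v ->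
        Kopt v eps = [set k; k.+1])
  /\ ((~ exists k : nat, (1 <= k <= v.-1)%N /\ (expR eps)%:E = @Eval R k k.+1 v) ->
        exists j : nat, Kopt v eps = [set j]).
Proof.
move=> v2 _; have a_ge0 := expR_ge0 eps.
split; [|split].
- move=> k kv; have k1 : (1 <= k)%N by case/andP: kv.
  by rewrite KoptP // lee_Eval_succ // gee_Eval_pred.
- by move=> k /andP[k1 _] /(Eval_succ_eq _ a_ge0 k1); apply: Kopt_tie.
- move=> no_tie; apply: Kopt_unique => // k /andP[k1 kv] tie.
  by apply: no_tie; exists k; split; [lia | exact/(Eval_succ_eq _ a_ge0 k1)].
Qed.
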